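(* Let $f_{n,i}$ denote the number of $i$-dimensional faces of the Whitehouse complex $\Delta_n$ ($n\ge 3$), with the convention $f_{m,j}=0$ for $j<-1$ or $j>m-4$. Then $f_{n,-1}=1$ for all $n\ge 3$, and for all $n\ge 4$ and $-1\le i\le n-4$, $$f_{n,i}=(i+2)\,f_{n-1,i}+(n+i-1)\,f_{n-1,i-1}.$$
   Context: The Whitehouse complex $\Delta_n$ ($n\ge 3$) is the simplicial complex with vertex set $V_n=\{S\subseteq\{2,\dots,n\}: 2\le |S|\le n-2\}$, in which a subset $F\subseteq V_n$ is a face iff for all $S,T\in F$ one has $S\subseteq T$, $T\subseteq S$, or $S\cap T=\emptyset$. (So $\Delta_3=\{\emptyset\}$.) A face $F$ has dimension $|F|-1$. *)

From mathcomp Require Import all_boot all_order all_algebra.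
Set Implicit Arguments. Unset Strict Implicit. Unset Printing Implicit Defensive.
Import Order.TTheory GRing.Theory Num.Theory.

(* Ground set {2,...,n} is represented inside 'I_n.+1 as the elements of value >= 2. *)

Definition wh_vertex (n : nat) (S : {set 'I_n.+1}) : bool :=
  [&& [forall x in S, 2 <= nat_of_ord x], 2 <= #|S| & #|S| <= n - 2].

Definition wh_face (n : nat) (F : {set {set 'I_n.+1}}) : bool :=
  [forall S in F, wh_vertex S] &&
  [forall S in F, forall T in F,
     [|| S \subset T, T \subset S | [disjoint S & T]]].

(* f n i = number of i-dimensional faces of Delta_n (i.e. faces with i+1 elements).
   Automatically 0 for i < -1. *)
Definition whf (n : nat) (i : int) : nat :=
  #|[set F : {set {set 'I_n.+1}} | wh_face F && ((#|F|%:Z)%R == (i + 1)%R)]|.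

From mathcomp Require Import all_boot all_order all_algebra.
From mathcomp Require Import zify.
Set Implicit Arguments. Unset Strict Implicit. Unset Printing Implicit Defensive.
Import Order.TTheory GRing.Theory Num.Theory.

(* Faces of the Whitehouse complex are the laminar families of subsets S of the
   ground set U = {2,...,n} with 2 <= |S| <= |U| - 1.  Fix the point a = n.
   Deleting a from every member of a face F of U and dropping the members that
   are then no longer vertices of U \ a gives a face G of U \ a.  F is recovered
   from G, the anchor A (the least member of F containing a, minus a; U \ a if
   there is none) and the bit c telling whether A itself belongs to F.
   Conversely every admissible anchor occurs: a member of G or U \ a itself
   (|G| + 1 choices, with either bit, giving |G| + c members), or a singleton of
   U \ a (bit false, giving |G| + 1 members).  Hence the number f(U, k) of faces
   with k members satisfies
     f(U, k+1) = (k+2) f(U \ a, k+1) + (k+1 + |U \ a|) f(U \ a, k),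
   which is the recurrence for f_{n,i} = f(U, i+1) at k = i. *)

Lemma card_set_sum (I : finType) (P : pred I) : #|[set i | P i]| = \sum_i P i.
Proof. by rewrite -sum1dep_card big_mkcond; apply: eq_bigr => i _; case: (P i). Qed.

Lemma card_singletons (T : finType) (Y : {set T}) :
  #|[set A : {set T} | (#|A| == 1) && (A \subset Y)]| = #|Y|.
Proof.
have -> : [set A : {set T} | (#|A| == 1) && (A \subset Y)] = [set [set y] | y in Y].
  apply/setP => A; rewrite inE; apply/andP/imsetP => [[/cards1P[y ->]]|[y yY ->]].
    by rewrite sub1set => yY; exists y.
  by rewrite cards1 sub1set.
exact/card_imset/set1_inj.
Qed.

Lemma sum_triple (I J K : finType) (f : I * J * K -> nat) :
  \sum_t f t = \sum_i \sum_j \sum_k f (i, j, k).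
Proof.
rewrite [RHS]pair_bigA [RHS]pair_bigA /=.
by apply: eq_bigr => -[[i j] k].
Qed.

Section LaminarFamilies.
Variable T : finType.
Implicit Types (U S R A B : {set T}) (F : {set {set T}}).

Definition vertex U S := [&& S \subset U, 2 <= #|S| & #|S| <= #|U| - 1].
Definition compatible S R := [|| S \subset R, R \subset S | [disjoint S & R]].
Definition face U F :=
  [forall S in F, vertex U S] && [forall S in F, forall R in F, compatible S R].

Definition nfaces U j := #|[set F | face U F && (#|F| == j)]|.

Lemma compatibleC S R : compatible S R = compatible R S.
Proof. by rewrite /compatible orbA (orbC (S \subset R)) -orbA disjoint_sym. Qed.

Lemma compatiblexx S : compatible S S.
Proof. by rewrite /compatible subxx. Qed.

Lemma faceP U F :
  reflect ((forall S, S \in F -> vertex U S) /\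
           (forall S R, S \in F -> R \in F -> compatible S R))
    (face U F).
Proof.
apply: (iffP andP) => [[/forall_inP vF /forall_inP cF]|[vF cF]]; split => //.
- by move=> S R /cF /forall_inP; apply.
- exact/forall_inP.
- by apply/forall_inP => S SF; apply/forall_inP => R; apply: cF.
Qed.

Lemma disjointP A B : reflect (forall x, x \in A -> x \in B -> False) [disjoint A & B].
Proof.
rewrite -setI_eq0; apply: (iffP eqP) => [AB0 x xA xB|AB].
- by have := in_set0 x; rewrite -AB0 inE xA xB.
- by apply/setP => x; rewrite !inE; apply/negP => /andP[/AB]; apply.
Qed.

Lemma compatible_set1 y S : compatible [set y] S.
Proof. by rewrite /compatible sub1set disjoints1; case: (y \in S); rewrite ?orbT. Qed.

Lemma compatible_setU1r a S R :
  a \notin S -> ~~ (R \subset S) -> compatible S R -> compatible S (a |: R).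
Proof.
move=> aS /negbTE RS /or3P[SR||dSR]; rewrite ?RS //.
  by rewrite /compatible (subset_trans SR (subsetU1 _ _)).
rewrite /compatible; apply/or3P; apply: Or33; apply/disjointP => x xS.
by rewrite in_setU1 (disjointFr dSR xS) orbF => /eqP xa; rewrite -xa xS in aS.
Qed.

Lemma compatible_setU1 a S R :
  ~~ [disjoint S & R] -> compatible S R -> compatible (a |: S) (a |: R).
Proof.
move=> /negbTE nd /or3P[SR|RS|]; rewrite ?nd //.
- by rewrite /compatible setUS.
- by rewrite /compatible (setUS _ RS) orbT.
Qed.

Lemma setD1_id a A : a \notin A -> A :\ a = A.
Proof. by move=> aA; apply/setDidPl; rewrite disjoint_sym disjoints1. Qed.

End LaminarFamilies.

Section PointInsertion.
Variables (T : finType) (U : {set T}) (a : T).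
Hypotheses (aU : a \in U) (U_gt2 : 2 < #|U|).
Implicit Types (S R A X : {set T}) (F G : {set {set T}}) (c : bool).

Definition raise A S := if A \subset S then a |: S else S.

Definition insert_point G A c :=
  raise A @: G :|: (if c then [set A] else if #|A| == 1 then [set a |: A] else set0).

Definition admissible G A c :=
  [|| A \in G, A == U :\ a | [&& #|A| == 1, A \subset U :\ a & ~~ c]].

Lemma insert_pointP G A c X :
  reflect [\/ X \in G /\ ~~ (A \subset X),
              exists2 S, S \in G /\ A \subset S & X = a |: S,
              c /\ X = A | [/\ ~~ c, #|A| = 1 & X = a |: A]]
    (X \in insert_point G A c).
Proof.
rewrite /insert_point inE; apply: (iffP orP).
- case=> [/imsetP[S SG ->]|]; rewrite /raise.
    by case: ifP => AS; [constructor 2; exists S | constructor 1; rewrite AS].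
  case: c; first by rewrite inE => /eqP; constructor 3.
  by case: eqP => // ?; rewrite inE => /eqP; constructor 4.
- case=> [[XG /negbTE nAX]|[S [SG AS] ->]|[-> ->]|[/negbTE -> /eqP -> ->]].
  + by left; apply/imsetP; exists X; rewrite // /raise nAX.
  + by left; apply/imsetP; exists S; rewrite // /raise AS.
  + by right; rewrite inE.
  + by right; rewrite inE.
Qed.

Lemma card_setD1_point : #|U :\ a| = #|U| - 1.
Proof. by rewrite (cardsD1 a U) aU; lia. Qed.

Lemma vertex_setD1 S : vertex (U :\ a) S -> vertex U S.
Proof.
case/and3P=> /subsetD1P[SU _] S2 S3.
by rewrite /vertex SU S2 /=; rewrite card_setD1_point in S3; lia.
Qed.

Lemma vertex_setD1U1 S : vertex (U :\ a) S -> vertex U (a |: S).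
Proof.
case/and3P=> /subsetD1P[SU aS] S2 S3; rewrite card_setD1_point in S3.
by rewrite /vertex subUset sub1set aU SU cardsU1 aS /=; lia.
Qed.

Lemma raiseK A S : a \notin S -> raise A S :\ a = S.
Proof. by move=> aS; rewrite /raise; case: ifP => _; rewrite ?setU1K ?setD1_id. Qed.

Definition delete_point F := [set S :\ a | S in [set S in F | vertex (U :\ a) (S :\ a)]].

(* The least member of [F] containing [a], or [U] if there is none. *)
Definition attachment F := U :&: \bigcap_(S in F | a \in S) S.

Definition anchor F := attachment F :\ a.

Lemma attachment_sub F S : S \in F -> a \in S -> attachment F \subset S.
Proof. by move=> SF aS; apply: subset_trans (subsetIr _ _) (bigcap_inf _ _); rewrite SF. Qed.

Lemma mem_attachment F : a \in attachment F.
Proof. by rewrite inE aU; apply/bigcapP => S /andP[]. Qed.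

Section InsertionInFace.
Variables (G : {set {set T}}) (A : {set T}) (c : bool).
Hypotheses (faceG : face (U :\ a) G) (admA : admissible G A c).

Lemma mem_face_setD1 S : S \in G -> S \subset U :\ a.
Proof. by case/faceP: faceG => vG _ /vG /andP[]. Qed.

Lemma notin_face_setD1 S : S \in G -> a \notin S.
Proof. by move/mem_face_setD1/subsetD1P=> []. Qed.

Lemma admissible_sub : A \subset U :\ a.
Proof. by case/or3P: admA => [/mem_face_setD1|/eqP->|/and3P[]]. Qed.

Lemma admissible_notin : a \notin A.
Proof. by case/subsetD1P: admissible_sub. Qed.

Lemma admissible_gt0 : 0 < #|A|.
Proof.
case/or3P: admA => [AG|/eqP->|/and3P[/eqP-> _ _]] //; last first.
  by rewrite card_setD1_point; lia.
by case/faceP: faceG => vG _; case/and3P: (vG _ AG); lia.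
Qed.

Lemma compatible_admissible X : X \in G -> compatible X A.
Proof.
case/faceP: faceG => _ cG XG; case/or3P: admA => [/(cG _ _ XG) //|/eqP->|].
  by rewrite /compatible mem_face_setD1.
by case/and3P=> /cards1P[y ->] _ _; rewrite compatibleC compatible_set1.
Qed.

Lemma insert_point_vertex X : X \in insert_point G A c -> vertex U X.
Proof.
have [vG _] := elimT (faceP _ _) faceG.
case/insert_pointP=> [[XG _]|[S [SG _] ->]|[cc ->]|].
- exact/vertex_setD1/vG.
- exact/vertex_setD1U1/vG.
- case/or3P: admA => [/vG/vertex_setD1 //|/eqP->|/and3P[_ _]]; last by rewrite cc.
  by rewrite /vertex subD1set card_setD1_point /=; lia.
- case=> _ /eqP/cards1P[y Ay] ->; have := admissible_sub; rewrite Ay sub1set => /setD1P[ya yU].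
  by rewrite /vertex subUset !sub1set aU yU cardsU1 cards1 !inE eq_sym ya /=; lia.
Qed.

Lemma insert_point_cases X : X \in insert_point G A c ->
  [\/ X \in G /\ ~~ (A \subset X), exists2 S, S \in A |: G /\ A \subset S & X = a |: S
     | X = A].
Proof.
case/insert_pointP=> [|[S [SG AS] ->]|[_ ->]|[_ _ ->]]; first by constructor 1.
- by constructor 2; exists S; rewrite ?setU1r.
- by constructor 3.
- by constructor 2; exists A; rewrite ?setU11.
Qed.

Lemma compatible_setU1_admissible S R : S \in A |: G -> R \in A |: G -> compatible S R.
Proof.
case/faceP: faceG => _ cG; case/setU1P=> [->|SG] /setU1P[->|RG].
- exact: compatiblexx.
- by rewrite compatibleC compatible_admissible.
- exact: compatible_admissible.
- exact: cG.
Qed.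

Lemma insert_point_face : face U (insert_point G A c).
Proof.
have cGA := compatible_setU1_admissible.
have meet S R : A \subset S -> A \subset R -> ~~ [disjoint S & R].
  move=> AS AR; have /set0Pn[y yA] : A != set0 by rewrite -card_gt0 admissible_gt0.
  by apply/negP => /disjointP/(_ y); apply; [apply: (subsetP AS) | apply: (subsetP AR)].
have outer_raised X S : X \in G -> ~~ (A \subset X) -> S \in A |: G -> A \subset S ->
    compatible X (a |: S).
  move=> XG nAX SG' AS; apply: compatible_setU1r (cGA _ _ _ SG').
  - exact: notin_face_setD1 XG.
  - by apply: contra nAX; apply: subset_trans.
  - by rewrite setU1r.
have raised_anchor S : A \subset S -> compatible (a |: S) A.
  by move=> AS; rewrite /compatible (subset_trans AS (subsetU1 _ _)) orbT.
apply/faceP; split=> [|X Z]; first exact: insert_point_vertex.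
case/insert_point_cases=> [[XG nAX]|[S [SG' AS] ->]|->].
all: case/insert_point_cases=> [[ZG nAZ]|[R [RG' AR] ->]|->].
- exact: cGA (setU1r _ XG) (setU1r _ ZG).
- exact: outer_raised.
- exact: cGA (setU1r _ XG) (setU11 _ _).
- by rewrite compatibleC; apply: outer_raised.
- exact: compatible_setU1 (meet _ _ AS AR) (cGA _ _ SG' RG').
- exact: raised_anchor.
- exact: cGA (setU11 _ _) (setU1r _ ZG).
- by rewrite compatibleC raised_anchor.
- exact: compatiblexx.
Qed.

Lemma card_insert_point : #|insert_point G A c| = #|G| + (c || (#|A| == 1)).
Proof.
have [vG _] := elimT (faceP _ _) faceG.
have aA := admissible_notin.
have disj : [disjoint raise A @: G &
               (if c then [set A] else if #|A| == 1 then [set a |: A] else set0)].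
  apply/disjointP => _ /imsetP[S SG ->]; have aS := notin_face_setD1 SG.
  case: c; last case: eqP => [A1|_]; rewrite ?inE // => /eqP; rewrite /raise.
  - case: ifP => AS SA; first by move: aA; rewrite -SA setU11.
    by rewrite SA subxx in AS.
  - case: ifP => AS; last by move=> SA; move: aS; rewrite SA setU11.
    move/(congr1 (fun X => X :\ a)); rewrite !setU1K // => SA.
    by case/and3P: (vG _ SG); rewrite SA A1.
rewrite cardsU (disjoint_setI0 disj) cards0 subn0 card_in_imset; last first.
  by move=> S R SG RG /(congr1 (fun X => X :\ a)); rewrite !raiseK ?notin_face_setD1.
by congr (_ + _); case: c; rewrite ?cards1 //; case: eqP; rewrite ?cards1 ?cards0.
Qed.

Lemma delete_insert_point : delete_point (insert_point G A c) = G.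
Proof.
have [vG _] := elimT (faceP _ _) faceG.
apply/setP => X; apply/imsetP/idP => [[S]|XG].
- rewrite inE => /andP[/insert_pointP SF vS] ->; move: vS.
  case: SF => [[SG _]|[R [RG _] ->]|[cc ->]|[_ A1 ->]].
  + by rewrite (setD1_id (notin_face_setD1 SG)).
  + by rewrite (setU1K (notin_face_setD1 RG)).
  + rewrite (setD1_id admissible_notin) => vA.
    case/or3P: admA => [//|/eqP AU|/and3P[_ _]]; last by rewrite cc.
    by move: vA; rewrite /vertex AU subxx card_setD1_point /=; lia.
  + by rewrite (setU1K admissible_notin) /vertex A1 => /and3P[].
- have aX := notin_face_setD1 XG.
  exists (raise A X); last by rewrite raiseK.
  by rewrite inE raiseK // vG // andbT inE imset_f.
Qed.

Lemma anchor_insert_point : anchor (insert_point G A c) = A.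
Proof.
rewrite /anchor; suff -> : attachment (insert_point G A c) = a |: A.
  by rewrite setU1K ?admissible_notin.
have AU : A \subset U by apply: subset_trans admissible_sub (subD1set _ _).
apply/eqP; rewrite eqEsubset; apply/andP; split.
- case/or3P: admA => [AG|/eqP AE|/and3P[A1 _ nc]].
  + apply: attachment_sub (setU11 _ _); apply/insert_pointP; constructor 2.
    by exists A.
  + by rewrite AE setD1K //; apply: subsetIl.
  + apply: attachment_sub (setU11 _ _); apply/insert_pointP; constructor 4.
    by split => //; apply/eqP.
- rewrite subsetI subUset sub1set aU AU /=; apply/bigcapsP => S /andP[/insert_pointP SF aS].
  case: SF => [[SG _]|[R [_ AR] ->]|[_ SA]|[_ _ ->]] //.
  + by rewrite (negbTE (notin_face_setD1 SG)) in aS.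
  + exact: setUS.
  + by rewrite SA (negbTE admissible_notin) in aS.
Qed.

Lemma anchor_in_insert_point : (A \in insert_point G A c) = c.
Proof.
have aA := admissible_notin.
apply/insert_pointP/idP => [[[_ /negP[]]|[S _ AS]|[]|[_ _ AS]] //|cc].
- by move: aA; rewrite AS setU11.
- by move: aA; rewrite {1}AS setU11.
- by constructor 3.
Qed.

End InsertionInFace.

Section DeletionFromFace.
Variable F : {set {set T}}.
Hypothesis faceF : face U F.

Lemma delete_point_face : face (U :\ a) (delete_point F).
Proof.
have [_ cF] := elimT (faceP _ _) faceF.
apply/faceP; split=> [X /imsetP[S]|X Z /imsetP[S SF' ->] /imsetP[R RF' ->]].
  by rewrite inE => /andP[_ vS] ->.
move: SF' RF'; rewrite !inE => /andP[SF _] /andP[RF _].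
case/or3P: (cF _ _ SF RF) => [SR|RS|dSR].
- by rewrite /compatible setSD.
- by rewrite /compatible (setSD _ RS) orbT.
- rewrite /compatible; apply/or3P; apply: Or33.
  by apply/disjointP => x /setD1P[_ xS] /setD1P[_ xR]; apply: (disjointP _ _ dSR x xS xR).
Qed.

Lemma attachment_cases : attachment F = U \/ attachment F \in F.
Proof.
have [vF cF] := elimT (faceP _ _) faceF.
have [S0 S0Fa|none] := pickP [pred S | (S \in F) && (a \in S)]; last first.
  left; apply/eqP; rewrite eqEsubset subsetIl subsetI subxx /=.
  by apply/bigcapsP => S /andP[SF aS]; move: (none S); rewrite /= SF aS.
right; case: (arg_minnP (fun S => #|S|) S0Fa) => P /andP[PF aP] Pmin.
suff -> : attachment F = P by [].
apply/eqP; rewrite eqEsubset attachment_sub //= subsetI.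
case/and3P: (vF _ PF) => -> _ _ /=; apply/bigcapsP => S /andP[SF aS].
case/or3P: (cF _ _ PF SF) => [//|SP|dPS].
- have /eqP-> // : S == P by rewrite eqEcard SP Pmin //= SF.
- by case: (disjointP _ _ dPS a aP aS).
Qed.

Lemma setU1_anchor : a |: anchor F = attachment F.
Proof. exact: setD1K (mem_attachment F). Qed.

Lemma anchor_sub : anchor F \subset U :\ a.
Proof. exact/setSD/subsetIl. Qed.

Lemma card_attachment : #|attachment F| = #|anchor F|.+1.
Proof. by rewrite -setU1_anchor cardsU1 /anchor setD11. Qed.

Lemma anchor_gt0 : 0 < #|anchor F|.
Proof.
have [vF _] := elimT (faceP _ _) faceF; have := card_attachment.
by case: attachment_cases => [->|/vF/and3P[_ I2 _]]; lia.
Qed.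

Lemma anchor_subset S : S \in F -> a \in S -> anchor F \subset S.
Proof. by move=> SF aS; apply: subset_trans (subD1set _ _) (attachment_sub SF aS). Qed.

Lemma anchor_eq S : S \in F -> a \notin S -> anchor F \subset S -> S = anchor F.
Proof.
have [vF cF] := elimT (faceP _ _) faceF.
move=> SF aS AS; apply/eqP; rewrite eqEsubset AS andbT subsetD1 aS andbT.
case: attachment_cases => [->|IF]; first by case/and3P: (vF _ SF).
case/or3P: (cF _ _ SF IF) => [//|IS|dSI].
  by rewrite (subsetP IS _ (mem_attachment F)) in aS.
have /set0Pn[y yA] : anchor F != set0 by rewrite -card_gt0 anchor_gt0.
by case: (disjointP _ _ dSI y (subsetP AS y yA) (subsetP (subD1set _ _) y yA)).
Qed.

Lemma attachment_mem : anchor F != U :\ a -> attachment F \in F.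
Proof. by case: attachment_cases => // IU; rewrite /anchor IU eqxx. Qed.

Lemma admissible_delete_point : admissible (delete_point F) (anchor F) (anchor F \in F).
Proof.
have [vF _] := elimT (faceP _ _) faceF.
have [AU|/attachment_mem IF] := eqVneq (anchor F) (U :\ a).
  by rewrite /admissible AU eqxx orbT.
have [A1|A1] := eqVneq #|anchor F| 1.
  have nAF : anchor F \notin F by apply/negP => /vF/and3P[_]; rewrite A1.
  by rewrite /admissible A1 anchor_sub nAF !orbT.
apply/orP; left; apply/imsetP; exists (attachment F) => //; rewrite inE IF /=.
rewrite /vertex -/(anchor F) anchor_sub card_setD1_point /=.
by case/and3P: (vF _ IF); rewrite card_attachment; have := anchor_gt0; lia.
Qed.

Lemma face_sub_insert_delete :
  F \subset insert_point (delete_point F) (anchor F) (anchor F \in F).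
Proof.
have [vF _] := elimT (faceP _ _) faceF.
have aA : a \notin anchor F by rewrite /anchor setD11.
apply/subsetP => X XF; have /and3P[XU X2 X3] := vF _ XF; apply/insert_pointP.
have [aX|aX] := boolP (a \in X).
  have AX : anchor F \subset X :\ a by rewrite subsetD1 anchor_subset.
  have [vX|nvX] := boolP (vertex (U :\ a) (X :\ a)).
    constructor 2; exists (X :\ a); last by rewrite setD1K.
    by split=> //; apply/imsetP; exists X; rewrite // inE XF.
  have cX : #|X :\ a| <= 1.
    move: nvX; rewrite /vertex setSD //= card_setD1_point.
    by have := cardsD1 a X; rewrite aX; lia.
  have A1 : #|anchor F| = 1 by have := subset_leq_card AX; have := anchor_gt0; lia.
  have XI : X = attachment F.
    apply/eqP; rewrite eq_sym eqEcard attachment_sub // card_attachment A1.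
    by have := cardsD1 a X; rewrite aX; lia.
  constructor 4; split=> //; last by rewrite XI setU1_anchor.
  by apply/negP => /vF/and3P[_]; rewrite A1.
have [XA|XA] := eqVneq X (anchor F); first by constructor 3; rewrite -XA XF.
have nAX : ~~ (anchor F \subset X) by apply: contra XA => /(anchor_eq XF aX)->.
constructor 1; split=> //; apply/imsetP; exists X; last by rewrite (setD1_id aX).
rewrite inE XF (setD1_id aX) /=.
have XY : X \proper U :\ a.
  rewrite properEneq subsetD1 XU aX !andbT; apply: contraNneq nAX => XE.
  by rewrite XE anchor_sub.
by rewrite /vertex proper_sub // X2 /=; have := proper_card XY; lia.
Qed.

Lemma insert_delete_sub_face :
  insert_point (delete_point F) (anchor F) (anchor F \in F) \subset F.
Proof.
have aA : a \notin anchor F by rewrite /anchor setD11.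
apply/subsetP => X /insert_pointP[[XG nAX]|[S [SG AS] ->]|[AF ->] //|[_ A1 ->]].
- case/imsetP: XG => S; rewrite inE => /andP[SF _] XE.
  have aS : a \notin S.
    by apply: contra nAX => aS; rewrite XE subsetD1 anchor_subset.
  by rewrite XE setD1_id.
- case/imsetP: SG => R; rewrite inE => /andP[RF vR] SE; rewrite {S}SE in AS *.
  have [aR|aR] := boolP (a \in R); first by rewrite setD1K.
  rewrite (setD1_id aR) in AS vR *; rewrite (anchor_eq RF aR AS) in vR *.
  rewrite setU1_anchor attachment_mem //; apply: contraTneq vR => ->.
  by rewrite /vertex subxx /=; lia.
- rewrite setU1_anchor attachment_mem //; apply/eqP => AU.
  by move: A1; rewrite AU card_setD1_point; lia.
Qed.

Lemma insert_delete_point :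
  insert_point (delete_point F) (anchor F) (anchor F \in F) = F.
Proof. by apply/eqP; rewrite eqEsubset insert_delete_sub_face face_sub_insert_delete. Qed.

End DeletionFromFace.

Definition insertion_data j :=
  [set t : {set {set T}} * {set T} * bool |
    [&& face (U :\ a) t.1.1, admissible t.1.1 t.1.2 t.2 &
        #|t.1.1| + (t.2 || (#|t.1.2| == 1)) == j]].

Lemma nfaces_insertion_data j : nfaces U j = #|insertion_data j|.
Proof.
pose ins (t : {set {set T}} * {set T} * bool) := insert_point t.1.1 t.1.2 t.2.
rewrite /nfaces; suff -> : [set F | face U F && (#|F| == j)] = ins @: insertion_data j.
  apply: card_in_imset.
  move=> [[G A] c] [[G' A'] c']; rewrite !inE /= => /and3P[fG adm _] /and3P[fG' adm' _] E.
  change (insert_point G A c = insert_point G' A' c') in E.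
  have eG : G = G' by rewrite -(delete_insert_point fG adm) E delete_insert_point.
  have eA : A = A' by rewrite -(anchor_insert_point fG adm) E anchor_insert_point.
  by rewrite -(anchor_in_insert_point fG adm) E -eG -eA anchor_in_insert_point // eG eA.
apply/setP => F; rewrite inE; apply/andP/imsetP.
- move=> [fF /eqP <-]; have fD := delete_point_face fF; have adm := admissible_delete_point fF.
  exists (delete_point F, anchor F, anchor F \in F).
    by rewrite inE /= fD adm -(card_insert_point fD adm) (insert_delete_point fF) eqxx.
  by rewrite /ins /= (insert_delete_point fF).
- move=> [[[G A] c]]; rewrite inE /= => /and3P[fG adm /eqP <-] ->.
  by rewrite /ins /= insert_point_face // card_insert_point.
Qed.

Lemma sum_admissible_size G A j : face (U :\ a) G ->
  \sum_(c : bool) (admissible G A c && (#|G| + (c || (#|A| == 1)) == j)) =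
  (A \in U :\ a |: G) * ((#|G|.+1 == j) + (#|G| == j)) +
  ((#|A| == 1) && (A \subset U :\ a)) * (#|G|.+1 == j).
Proof.
move=> fG; have [vG _] := elimT (faceP _ _) fG.
rewrite big_bool /admissible in_setU1 /=.
have [AX|nAX] := boolP ((A == U :\ a) || (A \in G)).
  have A1 : #|A| != 1.
    case/orP: AX => [/eqP->|/vG/and3P[_ A2 _]]; last by apply/eqP => A1; rewrite A1 in A2.
    by rewrite card_setD1_point; apply/eqP; lia.
  by rewrite (negbTE A1) /= !orbF (orbC (A \in G)) AX mul1n mul0n !addn0 addn1.
rewrite !orbA (orbC (A \in G)) (negbTE nAX) /=.
by case: (#|A| == 1); case: (A \subset U :\ a); rewrite /= ?addn1 ?mul0n ?mul1n ?add0n.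
Qed.

Lemma card_insertion_data k :
  #|insertion_data k.+1| =
    k.+2 * nfaces (U :\ a) k.+1 + (k.+1 + #|U :\ a|) * nfaces (U :\ a) k.
Proof.
rewrite /insertion_data card_set_sum sum_triple /=.
transitivity (\sum_G ((face (U :\ a) G && (#|G| == k.+1)) * k.+2 +
                      (face (U :\ a) G && (#|G| == k)) * (k.+1 + #|U :\ a|))); last first.
  by rewrite big_split /= -!big_distrl /= /nfaces !card_set_sum mulnC [X in _ + X]mulnC.
apply: eq_bigr => G _; have [fG|nfG] := boolP (face (U :\ a) G); last first.
  by rewrite big1 // => A _; rewrite big1 // => c _; rewrite (negbTE nfG).
under eq_bigr => A _ do rewrite (sum_admissible_size _ _ fG).
rewrite big_split /= -!big_distrl /= -!card_set_sum cardsE card_singletons cardsU1.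
have -> : U :\ a \notin G.
  by apply/negP => /(elimT (faceP _ _) fG).1/and3P[_ _]; rewrite card_setD1_point; lia.
rewrite eqSS; move: #|G| => g.
have [->|_] := eqVneq g k; first by rewrite (ltn_eqF (ltnSn k)) /=; lia.
by have [->|_] := eqVneq g k.+1; rewrite /=; lia.
Qed.

Lemma nfaces_recursion k :
  nfaces U k.+1 = k.+2 * nfaces (U :\ a) k.+1 + (k.+1 + #|U :\ a|) * nfaces (U :\ a) k.
Proof. by rewrite nfaces_insertion_data card_insertion_data. Qed.

End PointInsertion.

Section Transport.
Variables (T1 T2 : finType) (f : T1 -> T2).
Hypothesis f_inj : injective f.
Implicit Types (U S R : {set T1}) (F : {set {set T1}}).

Lemma imset_subsetE S R : (f @: S \subset f @: R) = (S \subset R).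
Proof.
apply/idP/idP => [/subsetP sSR|]; last exact: imsetS.
by apply/subsetP => x xS; rewrite -(mem_imset _ _ f_inj) sSR ?imset_f.
Qed.

Lemma vertex_imset U S : vertex (f @: U) (f @: S) = vertex U S.
Proof. by rewrite /vertex !card_imset // imset_subsetE. Qed.

Lemma compatible_imset S R : compatible (f @: S) (f @: R) = compatible S R.
Proof. by rewrite /compatible !imset_subsetE imset_disjoint. Qed.

Lemma face_imset U F : face (f @: U) [set f @: S | S : {set T1} in F] = face U F.
Proof.
apply/faceP/faceP => [[vF cF]|[vF cF]]; split.
- by move=> S SF; rewrite -vertex_imset vF ?imset_f.
- by move=> S R SF RF; rewrite -compatible_imset cF ?imset_f.
- by move=> _ /imsetP[S SF ->]; rewrite vertex_imset vF.
- by move=> _ _ /imsetP[S SF ->] /imsetP[R RF ->]; rewrite compatible_imset cF.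
Qed.

Lemma nfaces_imset U j : nfaces (f @: U) j = nfaces U j.
Proof.
have imset_set_inj := imset_inj (imset_inj f_inj).
rewrite /nfaces -(card_imset _ imset_set_inj); apply: eq_card => F'.
rewrite inE; apply/andP/imsetP => [[fF' cF']|[F]]; last first.
  rewrite inE => /andP[fF cF] ->.
  by rewrite face_imset fF (card_imset _ (imset_inj f_inj)).
have [vF' _] := elimT (faceP _ _) fF'.
have preK (S' : {set T2}) : S' \in F' -> f @: (f @^-1: S') = S'.
  move=> /vF'/and3P[/subsetP S'U _ _]; apply/setP => y; apply/imsetP/idP => [[x]|yS'].
    by rewrite inE => xS' ->.
  by have /imsetP[x _ yE] := S'U y yS'; exists x; rewrite // inE -yE.
have F'E : F' = [set f @: S | S : {set T1} in [set f @^-1: S' | S' : {set T2} in F']].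
  rewrite -imset_comp -[LHS]imset_id; apply: eq_in_imset => S' S'F /=.
  by rewrite preK.
exists [set f @^-1: S' | S' : {set T2} in F']; last exact: F'E.
by rewrite inE -(face_imset U) -F'E fF' -(card_imset _ (imset_inj f_inj)) -F'E.
Qed.

End Transport.

Lemma nfaces0 (T : finType) (U : {set T}) : nfaces U 0 = 1.
Proof.
rewrite /nfaces -(cards1 (set0 : {set {set T}})); apply: eq_card => F.
rewrite !inE cards_eq0 andb_idl // => /eqP->.
by apply/faceP; split=> S; rewrite inE.
Qed.

Definition wh_ground n := [set x : 'I_n.+1 | 2 <= x].

Lemma card_wh_ground n : #|wh_ground n| = n - 1.
Proof.
rewrite card_set_sum -(big_mkord xpredT (fun i => (2 <= i : nat))).
elim: n => [|n IHn]; first by rewrite big_nat1.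
by rewrite big_nat_recr //= IHn; case: n {IHn} => //= n; lia.
Qed.

Lemma wh_ground_setD1_max m : wh_ground m.+1 :\ ord_max = lift ord_max @: wh_ground m.
Proof.
apply/setP => x; rewrite !inE; case: (unliftP ord_max x) => [y ->|->].
  by rewrite mem_imset ?inE ?lift_max 1?eq_sym ?neq_lift //; apply: lift_inj.
rewrite eqxx; apply/esym/negbTE/imsetP => -[y _ E].
by have := neq_lift ord_max y; rewrite -E eqxx.
Qed.

Lemma wh_vertexE n (S : {set 'I_n.+1}) : wh_vertex S = vertex (wh_ground n) S.
Proof.
rewrite /wh_vertex /vertex card_wh_ground -subnDA; congr (_ && _).
by apply/forall_inP/subsetP => S2 x /S2; rewrite inE.
Qed.

Lemma whf_nfaces n (k : nat) : whf n (k%:Z - 1)%R = nfaces (wh_ground n) k.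
Proof.
rewrite /whf /nfaces; apply: eq_card => F; rewrite !inE subrK eqz_nat.
congr (_ && _); rewrite /wh_face /face; congr (_ && _).
by apply: eq_forallb_in => S _; rewrite wh_vertexE.
Qed.

Lemma whf_eq0 n (i : int) : (i < -1)%R -> whf n i = 0.
Proof.
by move=> i_lt; apply: eq_card0 => F; rewrite !inE; apply/negP => /andP[_ /eqP]; lia.
Qed.

Local Open Scope ring_scope.

Theorem mainTheorem5 :
  (forall n : nat, (3 <= n)%N -> whf n (-1) = 1%N) /\
  (forall (n : nat) (i : int), (4 <= n)%N -> -1 <= i -> i <= n%:Z - 4 ->
     (whf n i)%:Z =
       (i + 2) * (whf n.-1 i)%:Z + (n%:Z + i - 1) * (whf n.-1 (i - 1))%:Z).
Proof.
split=> [n _|[//|m] i m_ge3 i_ge _]; first by rewrite (whf_nfaces n 0) nfaces0.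
have [k ->] : exists k : nat, i = k%:Z - 1 by exists (absz (i + 1)); lia.
have max_in : ord_max \in wh_ground m.+1 by rewrite inE /=; lia.
have ground_gt2 : (2 < #|wh_ground m.+1|)%N by rewrite card_wh_ground; lia.
case: k => [|k] /=.
  rewrite (whf_eq0 m (i := 0%:Z - 1 - 1)) // !(whf_nfaces _ 0) !nfaces0; lia.
have -> : k.+1%:Z - 1 - 1 = k%:Z - 1 by lia.
rewrite !whf_nfaces (nfaces_recursion max_in ground_gt2) wh_ground_setD1_max.
rewrite !(nfaces_imset (@lift_inj _ ord_max)) (card_imset _ (@lift_inj _ ord_max)).
have -> : k.+1%:Z - 1 + 2 = k.+2 by lia.
have -> : m.+1%:Z + (k.+1%:Z - 1) - 1 = (k.+1 + #|wh_ground m|)%N.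
  by rewrite card_wh_ground; lia.
by rewrite PoszD !PoszM.
Qed.
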